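(* Let $m=2k+1$ with $k$ a nonnegative integer and let $n$ be an integer with $0\le n<m-1$. Let $M(u)=M(u^2+u^{2m})$, $u\in(0,+\infty)$, where $M(h)$ is the first order Melnikov function of $(1.1)_\epsilon$. Then $M(u)$ is a linear combination of the following $\left[\frac{n-1}{2}\right]+\left[\frac{n}{2}\right]^2+3\left[\frac{n}{2}\right]+3$ linearly independent functions on $(0,+\infty)$: $$u^{2p+1}\ (0\le p\le [n/2]);\qquad u^{2p+(m-1)(k+1)+1}\ (0\le p\le [n/2],\ 0\le k\le 2p);\qquad (u^2+u^{2m})^{l+1}\ (0\le l\le [(n-1)/2]),$$ (i.e. $u,u^3,\dots,u^{2[n/2]+1},u^{m},u^{m+2},u^{2m+1},\dots,u^{2[n/2]m+m},u^2+u^{2m},\dots,(u^2+u^{2m})^{[(n-1)/2]+1}$), and the coefficients of this linear combination are independent, i.e. as the coefficients of $p^\pm,q^\pm$ range over all real values these coefficients take all real values.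
   Context: $[x]$ is the integer part. System $(1.1)_\epsilon$: $\dot x=y+\epsilon p^{+},\ \dot y=-x+\epsilon q^{+}$ for $y\ge x^{m}$, and $\dot x=y+\epsilon p^{-},\ \dot y=-x+\epsilon q^{-}$ for $y<x^{m}$, where $p^{\pm}=\sum_{i+j=0}^{n}a^{\pm}_{i,j}x^iy^j$, $q^{\pm}=\sum_{i+j=0}^{n}b^{\pm}_{i,j}x^iy^j$ are arbitrary real polynomials of degree $n$. For $h>0$, $u=u(h)>0$ solves $u^2+u^{2m}=h$; $L_h^{+}$ is the arc of $x^2+y^2=h$ in $\{y\ge x^m\}$ traversed clockwise from $(-u,(-u)^m)$ to $(u,u^m)$, and $L_h^-$ the arc in $\{y\le x^m\}$ traversed clockwise from $(u,u^m)$ to $(-u,(-u)^m)$. The first order Melnikov function is $M(h)=\int_{L_h^+}q^+dx-p^+dy+\int_{L_h^-}q^-dx-p^-dy$. *)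

From Stdlib Require Import Reals Lra Lia ZArith List ClassicalEpsilon.
From Coquelicot Require Import Coquelicot.
Open Scope R_scope.

Definition poly2 (n : nat) (a : nat -> nat -> R) (x y : R) : R :=
  sum_f_R0 (fun i => sum_f_R0 (fun j => a i j * x ^ i * y ^ j) (n - i)) n.

Definition line_integral (P Q : R -> R -> R) (g1 g2 : R -> R) (a b : R) : R :=
  RInt (fun t => P (g1 t) (g2 t) * Derive g1 t + Q (g1 t) (g2 t) * Derive g2 t) a b.

Definition u_of_h (m : nat) (h : R) : R :=
  epsilon (inhabits 0) (fun u => 0 < u /\ u ^ 2 + u ^ (2 * m) = h).

(* Clockwise parametrization of the circle x^2+y^2=h: theta |-> (sqrt h sin theta, sqrt h cos theta).
   The intersection point (u,u^m) has angle th0 = acos(u^m/sqrt h) in (0,pi);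
   (-u,(-u)^m) = (-u,-u^m) (m odd) has angle th0 - pi (equivalently th0 + pi). *)
Definition circ_x (h t : R) : R := sqrt h * sin t.
Definition circ_y (h t : R) : R := sqrt h * cos t.
Definition theta0 (m : nat) (h : R) : R := acos ((u_of_h m h) ^ m / sqrt h).

(* First order Melnikov function of (1.1)_eps:
   M(h) = int_{L_h^+} q^+ dx - p^+ dy + int_{L_h^-} q^- dx - p^- dy,
   with p^+ = poly2 n ap, q^+ = poly2 n bp, p^- = poly2 n am, q^- = poly2 n bm.
   L_h^+ : theta from th0 - pi to th0 (from (-u,-u^m) to (u,u^m), clockwise, through the top);
   L_h^- : theta from th0 to th0 + pi (from (u,u^m) to (-u,-u^m), clockwise). *)
Definition melnikov (m n : nat) (ap bp am bm : nat -> nat -> R) (h : R) : R :=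
  line_integral (poly2 n bp) (fun x y => - poly2 n ap x y)
    (circ_x h) (circ_y h) (theta0 m h - PI) (theta0 m h)
  + line_integral (poly2 n bm) (fun x y => - poly2 n am x y)
    (circ_x h) (circ_y h) (theta0 m h) (theta0 m h + PI).

Definition basis (m n : nat) : list (R -> R) :=
  map (fun p => fun u : R => u ^ (2 * p + 1)) (seq 0 (n / 2 + 1))
  ++ flat_map (fun p => map (fun kk => fun u : R => u ^ (2 * p + (m - 1) * (kk + 1) + 1))
                            (seq 0 (2 * p + 1)))
              (seq 0 (n / 2 + 1))
  (* l ranges over 0 <= l <= [(n-1)/2], i.e. floor((n+1)/2) values (none if n = 0) *)
  ++ map (fun l => fun u : R => (u ^ 2 + u ^ (2 * m)) ^ (l + 1)) (seq 0 ((n + 1) / 2)).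

Fixpoint lincomb (fs : list (R -> R)) (cs : list R) (u : R) : R :=
  match fs, cs with
  | cons f fs', cons c cs' => c * f u + lincomb fs' cs' u
  | _, _ => 0
  end.

Definition lin_indep_pos (fs : list (R -> R)) : Prop :=
  forall cs : list R, length cs = length fs ->
    (forall u, 0 < u -> lincomb fs cs u = 0) -> List.Forall (fun c => c = 0) cs.

(* On the circle x^2 + y^2 = h, parametrised as (sqrt h sin t, sqrt h cos t), every monomial of
   q^+- dx - p^+- dy contributes sqrt h ^ (a + b) times an integral of sin^a cos^b over the half
   period [theta0 - PI, theta0] (arc L_h^+) or [theta0, theta0 + PI] (arc L_h^-), where
   sin theta0 = u / sqrt h and cos theta0 = u^m / sqrt h.  Integration by parts and
   sin^2 + cos^2 = 1 show that such a half-period integral is a constant when a + b is even and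
   twice a homogeneous form of degree a + b in (sin theta0, cos theta0) when a + b is odd.  After
   multiplication by sqrt h ^ (a + b) the first becomes a multiple of h^((a+b)/2), the second a
   homogeneous polynomial of odd degree in (u, u^m): this puts M(h(u)) in the span of the basis.
   Read backwards, the same identities show that every basis function is a Melnikov function.
   Independence: each basis function is a polynomial in u whose lowest-degree term has an
   exponent (its order) not shared by any other basis function. *)

From Stdlib Require Import Reals Lra Lia ZArith List ClassicalEpsilon.
From Coquelicot Require Import Coquelicot.
Open Scope R_scope.

Lemma sum_f_R0_pad (f : nat -> R) (N N' : nat) :
  (N <= N')%nat -> (forall k, (N < k <= N')%nat -> f k = 0) ->
  sum_f_R0 f N' = sum_f_R0 f N.
Proof.
  intros HN Hf. destruct (Nat.eq_dec N N') as [<-|Hne]; [reflexivity|].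
  rewrite (tech2 f N N') by lia. rewrite (sum_eq_R0 (fun i => f (S N + i)%nat)); [ring|].
  intros i Hi. apply Hf. lia.
Qed.

Lemma sum_f_R0_single (f : nat -> R) N i0 : (i0 <= N)%nat ->
  (forall i, i <> i0 -> f i = 0) -> sum_f_R0 f N = f i0.
Proof.
  intros Hi0 Hf. induction N as [|N IH]; simpl.
  - now replace i0 with 0%nat by lia.
  - destruct (Nat.eq_dec i0 (S N)) as [->|Hne].
    + rewrite sum_eq_R0; [ring|]. intros i Hi. apply Hf. lia.
    + rewrite IH, (Hf (S N)) by lia. ring.
Qed.

Lemma sum_f_R0_mul_add (f g : nat -> R) N x y :
  sum_f_R0 f N * x + sum_f_R0 g N * y = sum_f_R0 (fun i => f i * x + g i * y) N.
Proof. rewrite sum_plus, <- !scal_sum. ring. Qed.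

Lemma Forall2_map_map {A B C} (P : B -> C -> Prop) (f : A -> B) (g : A -> C) l :
  (forall x, In x l -> P (f x) (g x)) -> Forall2 P (map f l) (map g l).
Proof. induction l; simpl; intros; constructor; auto. Qed.

Lemma Forall2_flat_map {A B C} (P : B -> C -> Prop) (f : A -> list B) (g : A -> list C) l :
  (forall x, In x l -> Forall2 P (f x) (g x)) -> Forall2 P (flat_map f l) (flat_map g l).
Proof. induction l; simpl; intros; auto. apply Forall2_app; auto. Qed.

Lemma NoDup_flat_map {A B} (f : A -> list B) l : NoDup l ->
  (forall x, In x l -> NoDup (f x)) ->
  (forall x y b, In x l -> In y l -> x <> y -> In b (f x) -> ~ In b (f y)) ->
  NoDup (flat_map f l).
Proof.
  induction 1 as [|x l Hx Hl IH]; simpl; intros Hf Hdisj; [constructor|].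
  apply NoDup_app.
  - apply Hf. now left.
  - apply IH; [intros; apply Hf; now right|].
    intros y z b Hy Hz. apply Hdisj; now right.
  - intros b Hb (y & Hy & Hby)%in_flat_map.
    apply (Hdisj x y b); auto. intros ->. contradiction.
Qed.

(** * Polynomials on (0, +oo) and their order at 0 *)

Lemma poly_const_coeff_zero (C : nat -> R) (E : nat) :
  (forall u, 0 < u -> sum_f_R0 (fun k => C k * u ^ k) E = 0) -> C 0%nat = 0.
Proof.
  intros Hzero.
  set (P := fun u => sum_f_R0 (fun k => C k * u ^ k) E).
  assert (HP0 : P 0 = C 0%nat).
  { unfold P; clear Hzero P; induction E as [|E IH]; simpl; [ring | rewrite IH; ring]. }
  rewrite <- HP0.
  apply (filterlim_locally_unique (F := at_right 0) P).
  - apply (filterlim_filter_le_1 (F := locally 0)).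
    + intros Q HQ. now apply filter_imp with (2 := HQ).
    + apply continuity_pt_filterlim, continuity_finite_sum.
  - apply (filterlim_ext_loc (fun _ => 0)).
    + exists (mkposreal 1 Rlt_0_1). intros u _ Hu. symmetry. now apply Hzero.
    + apply filterlim_const.
Qed.

Lemma poly_coeffs_zero (E : nat) : forall C : nat -> R,
  (forall u, 0 < u -> sum_f_R0 (fun k => C k * u ^ k) E = 0) ->
  forall k, (k <= E)%nat -> C k = 0.
Proof.
  induction E as [|E IH]; intros C Hzero k Hk.
  - replace k with 0%nat by lia. exact (poly_const_coeff_zero C 0 Hzero).
  - pose proof (poly_const_coeff_zero C (S E) Hzero) as HC0.
    destruct k as [|k]; [exact HC0|].
    apply (IH (fun k => C (S k))); [|lia].
    intros u Hu.
    assert (Hsplit : u * sum_f_R0 (fun k => C (S k) * u ^ k) E = 0).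
    { rewrite <- (Hzero u Hu), (decomp_sum _ (S E)) by lia; simpl.
      rewrite HC0, scal_sum. ring_simplify. apply sum_eq; intros; ring. }
    apply Rmult_integral in Hsplit as [|]; [lra | assumption].
Qed.

Definition has_poly_order (d : nat) (f : R -> R) : Prop :=
  exists (E : nat) (C : nat -> R), (d <= E)%nat /\
    (forall u, f u = sum_f_R0 (fun k => C k * u ^ k) E) /\
    C d <> 0 /\ (forall k, (k < d)%nat -> C k = 0).

Lemma has_poly_order_ext d f g :
  has_poly_order d f -> (forall u, f u = g u) -> has_poly_order d g.
Proof.
  intros (E & C & HdE & Hf & Hd & Hlow) Hfg.
  exists E, C. split; [assumption|]. split; [|split; assumption].
  intros u. rewrite <- Hfg. apply Hf.
Qed.

Lemma has_poly_order_one : has_poly_order 0 (fun _ => 1).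
Proof.
  exists 0%nat, (fun _ => 1). split; [lia|]. split; [|split].
  - intros u. simpl. ring.
  - apply R1_neq_R0.
  - intros k Hk. lia.
Qed.

Lemma has_poly_order_mulX d f :
  has_poly_order d f -> has_poly_order (S d) (fun u => u * f u).
Proof.
  intros (E & C & HdE & Hf & Hd & Hlow).
  exists (S E), (fun k => match k with O => 0 | S k => C k end).
  split; [lia|]. split; [|split; [assumption|]].
  - intros u. rewrite (decomp_sum _ (S E)) by lia; simpl.
    rewrite Hf, scal_sum. ring_simplify. apply sum_eq; intros; ring.
  - intros [|k] Hk; [reflexivity|]. apply Hlow. lia.
Qed.

Lemma has_poly_order_mul_pow s d f :
  has_poly_order d f -> has_poly_order (s + d) (fun u => u ^ s * f u).
Proof.
  intros Hf. induction s as [|s IH].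
  - apply (has_poly_order_ext _ _ _ Hf). intros u; simpl; ring.
  - apply (has_poly_order_ext _ _ _ (has_poly_order_mulX _ _ IH)). intros u; simpl; ring.
Qed.

Lemma has_poly_order_pow e : has_poly_order e (fun u => u ^ e).
Proof.
  rewrite <- (Nat.add_0_r e).
  apply (has_poly_order_ext _ _ _ (has_poly_order_mul_pow e _ _ has_poly_order_one)).
  intros u. rewrite Nat.add_0_r. ring.
Qed.

Lemma has_poly_order_scal c d f :
  c <> 0 -> has_poly_order d f -> has_poly_order d (fun u => c * f u).
Proof.
  intros Hc (E & C & HdE & Hf & Hd & Hlow).
  exists E, (fun k => c * C k). split; [assumption|]. split; [|split].
  - intros u. rewrite Hf, scal_sum. apply sum_eq; intros; ring.
  - exact (Rmult_integral_contrapositive_currified _ _ Hc Hd).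
  - intros k Hk. rewrite Hlow by assumption. ring.
Qed.

Lemma has_poly_order_add d d' f g : (d < d')%nat ->
  has_poly_order d f -> has_poly_order d' g -> has_poly_order d (fun u => f u + g u).
Proof.
  intros Hdd' (E & C & HdE & Hf & Hd & Hlow) (E' & C' & HdE' & Hg & Hd' & Hlow').
  set (trunc N (A : nat -> R) k := if (k <=? N)%nat then A k else 0).
  assert (Htrunc : forall N A u, (N <= E + E')%nat ->
    sum_f_R0 (fun k => trunc N A k * u ^ k) (E + E') = sum_f_R0 (fun k => A k * u ^ k) N).
  { intros N A u HN. rewrite (sum_f_R0_pad _ N) by
      (auto; intros k Hk; unfold trunc; rewrite (proj2 (Nat.leb_gt k N)) by lia; ring).
    apply sum_eq. intros k Hk. unfold trunc. now rewrite (proj2 (Nat.leb_le k N)). }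
  exists (E + E')%nat, (fun k => trunc E C k + trunc E' C' k). split; [lia|]. split; [|split].
  - intros u. rewrite Hf, Hg, <- (Htrunc E C u), <- (Htrunc E' C' u), <- sum_plus by lia.
    apply sum_eq; intros; ring.
  - unfold trunc. rewrite (proj2 (Nat.leb_le d E)), (proj2 (Nat.leb_le d E')) by lia.
    rewrite (Hlow' d Hdd'). now rewrite Rplus_0_r.
  - intros k Hk. unfold trunc.
    destruct (k <=? E)%nat, (k <=? E')%nat; rewrite ?Hlow, ?Hlow' by lia; ring.
Qed.

Lemma has_poly_order_not_vanishing d f :
  has_poly_order d f -> ~ (forall u, 0 < u -> f u = 0).
Proof.
  intros (E & C & HdE & Hf & Hd & _) Hzero. apply Hd.
  apply (poly_coeffs_zero E C); [|assumption].
  intros u Hu. rewrite <- Hf. now apply Hzero.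
Qed.

Lemma lincomb_zero_coeffs fs cs u :
  List.Forall (fun c => c = 0) cs -> lincomb fs cs u = 0.
Proof.
  intros Hcs. revert fs. induction Hcs as [|c cs -> _ IH]; intros [|f fs]; simpl; auto.
  rewrite IH. ring.
Qed.

Lemma lincomb_poly_order fs ds :
  Forall2 (fun f d => has_poly_order d f) fs ds -> NoDup ds ->
  forall cs, length cs = length fs ->
  List.Forall (fun c => c = 0) cs \/ exists d, In d ds /\ has_poly_order d (lincomb fs cs).
Proof.
  induction 1 as [|f d fs ds Hfd _ IH]; intros Hnd [|c cs] Hlen; try discriminate.
  - left. constructor.
  - inversion Hnd as [|? ? Hdds Hnd']; subst.
    simpl in Hlen. destruct (IH Hnd' cs ltac:(lia)) as [Hzero | (d' & Hd' & Hord)].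
    + destruct (Req_dec c 0) as [->|Hc].
      * left. now constructor.
      * right. exists d. split; [now left|].
        apply (has_poly_order_ext _ _ _ (has_poly_order_scal c _ _ Hc Hfd)).
        intros u; simpl. rewrite lincomb_zero_coeffs by assumption. ring.
    + right. destruct (Req_dec c 0) as [->|Hc].
      * exists d'. split; [now right|].
        apply (has_poly_order_ext _ _ _ Hord). intros u; simpl. ring.
      * assert (Hne : d <> d') by (intros ->; contradiction).
        destruct (Nat.lt_gt_cases d d') as [[Hlt|Hgt] _]; [assumption| |].
        -- exists d. split; [now left|].
           exact (has_poly_order_add _ _ _ _ Hlt (has_poly_order_scal c _ _ Hc Hfd) Hord).
        -- exists d'. split; [now right|].
           apply (has_poly_order_ext _ _ _
             (has_poly_order_add _ _ _ _ Hgt Hord (has_poly_order_scal c _ _ Hc Hfd))).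
           intros u; simpl. ring.
Qed.

Lemma lin_indep_pos_of_poly_orders fs ds :
  Forall2 (fun f d => has_poly_order d f) fs ds -> NoDup ds -> lin_indep_pos fs.
Proof.
  intros Hord Hnd cs Hlen Hzero.
  destruct (lincomb_poly_order fs ds Hord Hnd cs Hlen) as [Hcs | (d & _ & Hd)]; [assumption|].
  exfalso. exact (has_poly_order_not_vanishing d _ Hd Hzero).
Qed.

(** * Subspaces of functions on (0, +oo) *)

Record pos_subspace (S : (R -> R) -> Prop) : Prop := {
  pos_subspace_zero : S (fun _ => 0);
  pos_subspace_add : forall f g, S f -> S g -> S (fun u => f u + g u);
  pos_subspace_scal : forall c f, S f -> S (fun u => c * f u);
  pos_subspace_ext : forall f g, S f -> (forall u, 0 < u -> f u = g u) -> S g }.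

Section PosSubspace.

Variable S : (R -> R) -> Prop.
Hypothesis HS : pos_subspace S.

Lemma pos_subspace_sum (G : nat -> R -> R) N :
  (forall i, (i <= N)%nat -> S (G i)) -> S (fun u => sum_f_R0 (fun i => G i u) N).
Proof.
  induction N as [|N IH]; intros HG; simpl; [apply HG; lia|].
  apply (pos_subspace_add _ HS); [apply IH; intros; apply HG|apply HG]; lia.
Qed.

Lemma pos_subspace_lincomb fs cs :
  (forall f, In f fs -> S f) -> S (lincomb fs cs).
Proof.
  revert cs. induction fs as [|f fs IH]; intros [|c cs] Hfs; simpl;
    try exact (pos_subspace_zero _ HS).
  apply (pos_subspace_add _ HS (fun u => c * f u)).
  - apply (pos_subspace_scal _ HS), Hfs. now left.
  - apply IH. intros g Hg. apply Hfs. now right.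
Qed.

End PosSubspace.

Definition span (fs : list (R -> R)) (g : R -> R) : Prop :=
  exists cs, length cs = length fs /\ forall u, 0 < u -> g u = lincomb fs cs u.

Lemma lincomb_add fs : forall cs1 cs2 u,
  length cs1 = length fs -> length cs2 = length fs ->
  lincomb fs (map (fun p => fst p + snd p) (combine cs1 cs2)) u
  = lincomb fs cs1 u + lincomb fs cs2 u.
Proof.
  induction fs as [|f fs IH]; intros [|c1 cs1] [|c2 cs2] u H1 H2; simpl in *;
    try discriminate; [ring|].
  rewrite IH by lia. ring.
Qed.

Lemma lincomb_scal fs : forall cs c u, lincomb fs (map (Rmult c) cs) u = c * lincomb fs cs u.
Proof. induction fs as [|f fs IH]; intros [|c' cs] c u; simpl; try ring. rewrite IH. ring. Qed.

Lemma span_pos_subspace fs : pos_subspace (span fs).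
Proof.
  split.
  - exists (repeat 0 (length fs)). split; [apply repeat_length|].
    intros u _. symmetry. apply lincomb_zero_coeffs, Forall_forall.
    intros c Hc. now apply repeat_spec in Hc.
  - intros f g (cs1 & H1 & Hf) (cs2 & H2 & Hg).
    exists (map (fun p => fst p + snd p) (combine cs1 cs2)). split.
    + rewrite length_map, length_combine. lia.
    + intros u Hu. rewrite lincomb_add, Hf, Hg by assumption. reflexivity.
  - intros c f (cs & Hlen & Hf). exists (map (Rmult c) cs). split.
    + now rewrite length_map.
    + intros u Hu. now rewrite lincomb_scal, Hf.
  - intros f g (cs & Hlen & Hf) Hfg. exists cs. split; [assumption|].
    intros u Hu. rewrite <- Hfg by assumption. now apply Hf.
Qed.

Lemma span_In fs f : In f fs -> span fs f.
Proof.
  induction fs as [|g fs IH]; intros Hin; [destruct Hin|].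
  destruct Hin as [<-|Hin].
  - exists (1 :: repeat 0 (length fs)). split; [simpl; now rewrite repeat_length|].
    intros u _. simpl. rewrite lincomb_zero_coeffs; [ring|].
    apply Forall_forall. intros c Hc. now apply repeat_spec in Hc.
  - destruct (IH Hin) as (cs & Hlen & Hf). exists (0 :: cs). split; [simpl; lia|].
    intros u Hu. simpl. rewrite <- Hf by assumption. ring.
Qed.

(** * Integrals of sin^a cos^b over half periods *)

Lemma ex_RInt_of_derivable (f : R -> R) lo hi :
  (forall t, ex_derive f t) -> ex_RInt f lo hi.
Proof.
  intros Hf. apply (@ex_RInt_continuous R_CompleteNormedModule). intros t _.
  apply (@ex_derive_continuous R_AbsRing R_NormedModule), Hf.
Qed.

Lemma RInt_of_derive (f df : R -> R) lo hi :
  (forall t, is_derive f t (df t)) -> (forall t, ex_derive df t) ->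
  RInt df lo hi = f hi - f lo.
Proof.
  intros Hf Hdf. apply is_RInt_unique, (is_RInt_derive f df); intros t _; [apply Hf|].
  apply (@ex_derive_continuous R_AbsRing R_NormedModule), Hdf.
Qed.

Lemma RInt_ext_R (f g : R -> R) lo hi :
  (forall t, f t = g t) -> RInt f lo hi = RInt g lo hi.
Proof. intros Hfg. apply RInt_ext. intros t _. apply Hfg. Qed.

Lemma RInt_lincomb2 (f g : R -> R) (al be lo hi : R) :
  ex_RInt f lo hi -> ex_RInt g lo hi ->
  RInt (fun t => al * f t - be * g t) lo hi = al * RInt f lo hi - be * RInt g lo hi.
Proof.
  intros Hf Hg. apply is_RInt_unique.
  apply (is_RInt_minus (V := R_NormedModule)); apply (is_RInt_scal (V := R_NormedModule));
    now apply (RInt_correct (V := R_CompleteNormedModule)).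
Qed.

Lemma ex_RInt_sum_f_R0 (f : nat -> R -> R) N lo hi : (forall i, ex_RInt (f i) lo hi) ->
  ex_RInt (fun t => sum_f_R0 (fun i => f i t) N) lo hi.
Proof.
  intros Hf. induction N as [|N IH]; simpl; [apply Hf|].
  now apply (ex_RInt_plus (V := R_CompleteNormedModule)).
Qed.

Lemma RInt_sum_f_R0 (f : nat -> R -> R) N lo hi : (forall i, ex_RInt (f i) lo hi) ->
  RInt (fun t => sum_f_R0 (fun i => f i t) N) lo hi = sum_f_R0 (fun i => RInt (f i) lo hi) N.
Proof.
  intros Hf. induction N as [|N IH]; simpl; [reflexivity|]. rewrite <- IH.
  exact (RInt_plus (V := R_CompleteNormedModule) _ _ _ _
           (ex_RInt_sum_f_R0 f N lo hi Hf) (Hf (S N))).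
Qed.

Lemma sin_cos_sq_sum t : sin t ^ 2 + cos t ^ 2 = 1.
Proof. rewrite <- (sin2_cos2 t). unfold Rsqr. ring. Qed.

Lemma pow_neg1_parity D : (-1) ^ D = if Nat.even D then 1 else -1.
Proof.
  induction D as [|D IH]; [reflexivity|].
  rewrite Nat.even_succ, <- Nat.negb_even. simpl. rewrite IH.
  destruct (Nat.even D); simpl; ring.
Qed.

Lemma sin_cos_pow_minus_PI i j t :
  sin (t - PI) ^ i * cos (t - PI) ^ j = (-1) ^ (i + j) * (sin t ^ i * cos t ^ j).
Proof.
  rewrite sin_minus, cos_minus, sin_PI, cos_PI, pow_add.
  replace (sin t * -1 - cos t * 0) with (-1 * sin t) by ring.
  replace (cos t * -1 + sin t * 0) with (-1 * cos t) by ring.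
  rewrite !Rpow_mult_distr. ring.
Qed.

Definition trig_int (a b : nat) (lo hi : R) : R :=
  RInt (fun t => sin t ^ a * cos t ^ b) lo hi.

Lemma ex_RInt_sin_cos a b lo hi : ex_RInt (fun t => sin t ^ a * cos t ^ b) lo hi.
Proof. apply ex_RInt_of_derivable. intros t. auto_derive. auto. Qed.

Lemma trig_int_pythagoras a b lo hi :
  trig_int a b lo hi = trig_int (a + 2) b lo hi + trig_int a (b + 2) lo hi.
Proof.
  unfold trig_int. rewrite <- (RInt_plus (V := R_CompleteNormedModule)) by apply ex_RInt_sin_cos.
  apply RInt_ext_R. intros t.
  transitivity (sin t ^ a * cos t ^ b * (sin t ^ 2 + cos t ^ 2)); [rewrite sin_cos_sq_sum; ring|].
  rewrite !pow_add. unfold plus; simpl. ring.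
Qed.

(* The truncated [a - 1] and [b - 1] are harmless: their coefficients vanish when a = 0 or b = 0. *)
Lemma trig_int_parts a b lo hi :
  INR a * trig_int (a - 1) (b + 1) lo hi - INR b * trig_int (a + 1) (b - 1) lo hi
  = sin hi ^ a * cos hi ^ b - sin lo ^ a * cos lo ^ b.
Proof.
  unfold trig_int.
  rewrite <- RInt_lincomb2 by apply ex_RInt_sin_cos.
  apply (RInt_of_derive (fun t => sin t ^ a * cos t ^ b)).
  - intros t. auto_derive; [auto|]. unfold scal, minus, plus, opp; simpl. unfold mult; simpl.
    destruct a as [|a], b as [|b]; simpl; rewrite ?Nat.sub_0_r, ?Nat.add_1_r, ?S_INR; simpl; ring.
  - intros t. auto_derive. auto.
Qed.

Lemma trig_int_reduce_sin a b lo hi :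
  INR (a + 1) * trig_int a b lo hi - INR (a + b + 2) * trig_int (a + 2) b lo hi
  = sin hi ^ (a + 1) * cos hi ^ (b + 1) - sin lo ^ (a + 1) * cos lo ^ (b + 1).
Proof.
  rewrite <- trig_int_parts, (trig_int_pythagoras a b).
  replace (a + 1 - 1)%nat with a by lia. replace (b + 1 - 1)%nat with b by lia.
  replace (a + 1 + 1)%nat with (a + 2)%nat by lia. replace (b + 1 + 1)%nat with (b + 2)%nat by lia.
  rewrite !plus_INR. simpl. ring.
Qed.

Lemma trig_int_reduce_cos a b lo hi :
  INR (b + 1) * trig_int a b lo hi - INR (a + b + 2) * trig_int a (b + 2) lo hi
  = - (sin hi ^ (a + 1) * cos hi ^ (b + 1) - sin lo ^ (a + 1) * cos lo ^ (b + 1)).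
Proof.
  rewrite <- trig_int_parts, (trig_int_pythagoras a b).
  replace (a + 1 - 1)%nat with a by lia. replace (b + 1 - 1)%nat with b by lia.
  replace (a + 1 + 1)%nat with (a + 2)%nat by lia. replace (b + 1 + 1)%nat with (b + 2)%nat by lia.
  rewrite !plus_INR. simpl. ring.
Qed.

Definition half_int (a b : nat) (t : R) : R := trig_int a b (t - PI) t.

Lemma half_int_jump a b t :
  sin t ^ a * cos t ^ b - sin (t - PI) ^ a * cos (t - PI) ^ b
  = (if Nat.even (a + b) then 0 else 2) * (sin t ^ a * cos t ^ b).
Proof.
  rewrite sin_cos_pow_minus_PI, pow_neg1_parity. destruct (Nat.even (a + b)); ring.
Qed.

Lemma half_int_zero_zero t : half_int 0 0 t = PI.
Proof.
  unfold half_int, trig_int. simpl.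
  rewrite (RInt_ext_R _ (fun _ => 1)) by (intros; apply Rmult_1_r).
  rewrite RInt_const. unfold scal; simpl; unfold mult; simpl. ring.
Qed.

Inductive hom_form : nat -> (R -> R -> R) -> Prop :=
| hom_form_monomial i j : hom_form (i + j) (fun s c => s ^ i * c ^ j)
| hom_form_add D F G : hom_form D F -> hom_form D G -> hom_form D (fun s c => F s c + G s c)
| hom_form_scal D k F : hom_form D F -> hom_form D (fun s c => k * F s c)
| hom_form_ext D F G : hom_form D F -> (forall s c, F s c = G s c) -> hom_form D G.

Lemma hom_form_monomial' D i j : (i + j = D)%nat -> hom_form D (fun s c => s ^ i * c ^ j).
Proof. intros <-. constructor. Qed.

Lemma hom_form_mul_norm2 D F :
  hom_form D F -> hom_form (D + 2) (fun s c => F s c * (s ^ 2 + c ^ 2)).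
Proof.
  induction 1 as [i j | D F G _ IHF _ IHG | D k F _ IH | D F G _ IH HFG].
  - eapply hom_form_ext.
    + apply hom_form_add;
        [apply (hom_form_monomial' _ (i + 2) j) | apply (hom_form_monomial' _ i (j + 2))]; lia.
    + intros s c. cbv beta. rewrite !pow_add. ring.
  - eapply hom_form_ext; [apply (hom_form_add _ _ _ IHF IHG)|]. intros s c. cbv beta. ring.
  - eapply hom_form_ext; [apply (hom_form_scal _ k _ IH)|]. intros s c. cbv beta. ring.
  - eapply hom_form_ext; [apply IH|]. intros s c. cbv beta. now rewrite HFG.
Qed.

Lemma hom_form_opp D F : hom_form D F -> forall s c, F (- s) (- c) = (-1) ^ D * F s c.
Proof.
  induction 1 as [i j | D F G _ IHF _ IHG | D k F _ IH | D F G _ IH HFG]; intros s c.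
  - replace (- s) with (-1 * s) by ring. replace (- c) with (-1 * c) by ring.
    rewrite !Rpow_mult_distr, pow_add. ring.
  - rewrite IHF, IHG. ring.
  - rewrite IH. ring.
  - rewrite <- !HFG. apply IH.
Qed.

Definition half_int_shape (D : nat) (G : R -> R) : Prop :=
  if Nat.even D then exists kappa, forall t, G t = kappa
  else exists F, hom_form D F /\ forall t, G t = 2 * F (sin t) (cos t).

(* Both reduction formulas [trig_int_reduce_sin] and [trig_int_reduce_cos] have this form. *)
Lemma half_int_shape_step a b (sgn al be : R) (G G' : R -> R) : be <> 0 ->
  (forall t, al * G t - be * G' t =
     sgn * (sin t ^ (a + 1) * cos t ^ (b + 1) - sin (t - PI) ^ (a + 1) * cos (t - PI) ^ (b + 1))) ->
  half_int_shape (a + b) G -> half_int_shape (a + b + 2) G'.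
Proof.
  intros Hbe Hrec.
  assert (Hpar : Nat.even (a + b + 2) = Nat.even (a + b))
    by (replace (a + b + 2)%nat with (S (S (a + b))) by lia; reflexivity).
  setoid_rewrite half_int_jump in Hrec.
  replace (a + 1 + (b + 1))%nat with (a + b + 2)%nat in Hrec by lia.
  unfold half_int_shape. rewrite Hpar in Hrec |- *.
  destruct (Nat.even (a + b)).
  - intros [kappa Hk]. exists (al * kappa / be). intros t.
    specialize (Hrec t). rewrite Hk in Hrec. field_simplify_eq; [nra | assumption].
  - intros (F & HF & HG).
    exists (fun s c =>
      / be * (al * (F s c * (s ^ 2 + c ^ 2)) + (- sgn) * (s ^ (a + 1) * c ^ (b + 1)))).
    split.
    + apply hom_form_scal, hom_form_add; apply hom_form_scal;
        [apply hom_form_mul_norm2, HF | apply hom_form_monomial'; lia].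
    + intros t. specialize (Hrec t). rewrite HG in Hrec. rewrite sin_cos_sq_sum.
      field_simplify_eq; [nra | assumption].
Qed.

Lemma half_int_shape_base a b : (a <= 1)%nat -> (b <= 1)%nat ->
  half_int_shape (a + b) (half_int a b).
Proof.
  intros Ha Hb. unfold half_int_shape.
  destruct a as [|[|]], b as [|[|]]; try lia; simpl Nat.even; cbv iota.
  - exists PI. apply half_int_zero_zero.
  - exists (fun s c => s ^ 1 * c ^ 0). split; [apply (hom_form_monomial 1 0)|].
    intros t. unfold half_int. pose proof (trig_int_parts 1 0 (t - PI) t) as Hparts.
    rewrite sin_cos_pow_minus_PI in Hparts. simpl in *. lra.
  - exists (fun s c => -1 * (s ^ 0 * c ^ 1)).
    split; [apply hom_form_scal, (hom_form_monomial 0 1)|].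
    intros t. unfold half_int. pose proof (trig_int_parts 0 1 (t - PI) t) as Hparts.
    rewrite sin_cos_pow_minus_PI in Hparts. simpl in *. lra.
  - exists 0. intros t. unfold half_int. pose proof (trig_int_parts 2 0 (t - PI) t) as Hparts.
    rewrite sin_cos_pow_minus_PI in Hparts. simpl in *. lra.
Qed.

Lemma half_int_shape_all a b : half_int_shape (a + b) (half_int a b).
Proof.
  assert (Hsmall_a : forall a, (a <= 1)%nat -> forall b, half_int_shape (a + b) (half_int a b)).
  { intros a' Ha b'. induction b' as [b' IH] using (well_founded_induction lt_wf).
    destruct (Nat.le_gt_cases b' 1) as [Hb|Hb]; [now apply half_int_shape_base|].
    replace b' with (b' - 2 + 2)%nat by lia. rewrite Nat.add_assoc.
    apply (half_int_shape_step a' (b' - 2) (-1) (INR (b' - 2 + 1)) (INR (a' + (b' - 2) + 2))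
             (half_int a' (b' - 2))).
    - apply not_0_INR. lia.
    - intros t. unfold half_int. rewrite trig_int_reduce_cos. ring.
    - apply IH. lia. }
  induction a as [a IH] using (well_founded_induction lt_wf).
  destruct (Nat.le_gt_cases a 1) as [Ha|Ha]; [now apply Hsmall_a|].
  replace a with (a - 2 + 2)%nat by lia.
  replace (a - 2 + 2 + b)%nat with (a - 2 + b + 2)%nat by lia.
  apply (half_int_shape_step (a - 2) b 1 (INR (a - 2 + 1)) (INR (a - 2 + b + 2))
           (half_int (a - 2) b)).
  - apply not_0_INR. lia.
  - intros t. unfold half_int. rewrite trig_int_reduce_sin. ring.
  - apply IH. lia.
Qed.

Lemma half_int_cos_pow_pos q t : 0 < half_int 0 (2 * q) t.
Proof.
  induction q as [|q IH]; [rewrite half_int_zero_zero; exact PI_RGT_0|].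
  pose proof (trig_int_reduce_cos 0 (2 * q) (t - PI) t) as Hrec.
  rewrite half_int_jump in Hrec.
  replace (Nat.even (0 + 1 + (2 * q + 1))) with true in Hrec
    by (replace (0 + 1 + (2 * q + 1))%nat with (2 * (q + 1))%nat by lia;
        now rewrite Nat.even_mul).
  replace (2 * S q)%nat with (2 * q + 2)%nat by lia.
  assert (0 < INR (2 * q + 1)) by (apply lt_0_INR; lia).
  assert (0 < INR (0 + 2 * q + 2)) by (apply lt_0_INR; lia).
  unfold half_int in *. nra.
Qed.

(** * The Melnikov function on the circles x^2 + y^2 = h *)

Definition h_of_u (m : nat) (u : R) : R := u ^ 2 + u ^ (2 * m).

Lemma h_of_u_pos m u : 0 < u -> 0 < h_of_u m u.
Proof.
  intros Hu. unfold h_of_u. pose proof (pow_lt u 2 Hu). pose proof (pow_lt u (2 * m) Hu). lra.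
Qed.

Lemma h_of_u_increasing m v w : 0 < v -> v < w -> h_of_u m v < h_of_u m w.
Proof.
  intros Hv Hvw. unfold h_of_u.
  assert (v ^ 2 < w ^ 2) by (simpl; nra).
  assert (v ^ (2 * m) <= w ^ (2 * m)) by (apply pow_incr; lra). lra.
Qed.

Lemma u_of_h_of_u m u : 0 < u -> u_of_h m (h_of_u m u) = u.
Proof.
  intros Hu. unfold u_of_h.
  destruct (epsilon_spec (inhabits 0) (fun v => 0 < v /\ v ^ 2 + v ^ (2 * m) = h_of_u m u))
    as [Hv Heq]; [now exists u|].
  set (v := epsilon _ _) in *. fold (h_of_u m v) in Heq.
  destruct (Rtotal_order v u) as [Hlt|[Heq'|Hgt]]; [|assumption|].
  - pose proof (h_of_u_increasing m v u Hv Hlt). lra.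
  - pose proof (h_of_u_increasing m u v Hu Hgt). lra.
Qed.

Lemma sin_cos_theta0 m u : 0 < u ->
  sin (theta0 m (h_of_u m u)) = u / sqrt (h_of_u m u) /\
  cos (theta0 m (h_of_u m u)) = u ^ m / sqrt (h_of_u m u).
Proof.
  intros Hu. unfold theta0. rewrite u_of_h_of_u by assumption.
  pose proof (h_of_u_pos m u Hu) as Hh.
  pose proof (sqrt_lt_R0 _ Hh) as Hs.
  pose proof (pow2_sqrt (h_of_u m u) (Rlt_le _ _ Hh)) as Hs2.
  set (s := sqrt (h_of_u m u)) in *. set (x := u ^ m / s).
  assert (Hx2 : x ^ 2 = 1 - (u / s) ^ 2).
  { unfold x, Rdiv. rewrite !Rpow_mult_distr, !pow_inv, Hs2, <- pow_mult, Nat.mul_comm.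
    unfold h_of_u. field. fold (h_of_u m u). lra. }
  assert (Hx0 : 0 <= x) by (apply Rle_mult_inv_pos; [apply pow_le|]; lra).
  assert (Hx1 : -1 <= x <= 1).
  { assert (0 <= (u / s) ^ 2) by apply pow2_ge_0. split; nra. }
  split; [|now apply cos_acos].
  rewrite sin_acos by assumption. rewrite Rsqr_pow2.
  replace (1 - x ^ 2) with ((u / s) ^ 2) by lra.
  apply sqrt_pow2. apply Rle_mult_inv_pos; lra.
Qed.

Lemma Derive_circ_x h t : Derive (circ_x h) t = sqrt h * cos t.
Proof. unfold circ_x. apply is_derive_unique. auto_derive; auto. ring. Qed.

Lemma Derive_circ_y h t : Derive (circ_y h) t = - (sqrt h * sin t).
Proof. unfold circ_y. apply is_derive_unique. auto_derive; auto. ring. Qed.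

Lemma line_integral_circle n a b h lo hi :
  line_integral (poly2 n b) (fun x y => - poly2 n a x y) (circ_x h) (circ_y h) lo hi =
  sum_f_R0 (fun i => sum_f_R0 (fun j => sqrt h ^ (i + j + 1) *
    (b i j * trig_int i (j + 1) lo hi + a i j * trig_int (i + 1) j lo hi)) (n - i)) n.
Proof.
  set (g i j t := sqrt h ^ (i + j + 1) *
    (b i j * (sin t ^ i * cos t ^ (j + 1)) + a i j * (sin t ^ (i + 1) * cos t ^ j))).
  assert (Hg : forall i j, ex_RInt (g i j) lo hi)
    by (intros; apply ex_RInt_of_derivable; intros; unfold g; auto_derive; auto).
  unfold line_integral.
  rewrite (RInt_ext_R _ (fun t => sum_f_R0 (fun i => sum_f_R0 (fun j => g i j t) (n - i)) n)).
  - rewrite RInt_sum_f_R0 by (intros i; apply ex_RInt_sum_f_R0, Hg).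
    apply sum_eq; intros i _. rewrite RInt_sum_f_R0 by apply Hg.
    apply sum_eq; intros j _. unfold g, trig_int.
    rewrite (RInt_ext_R _ (fun t => (sqrt h ^ (i + j + 1) * b i j) * (sin t ^ i * cos t ^ (j + 1))
        - (- (sqrt h ^ (i + j + 1) * a i j)) * (sin t ^ (i + 1) * cos t ^ j)))
      by (intros; ring).
    rewrite RInt_lincomb2 by apply ex_RInt_sin_cos. ring.
  - intros t. rewrite Derive_circ_x, Derive_circ_y. unfold poly2.
    rewrite Ropp_mult_distr_l_reverse, Ropp_mult_distr_r_reverse, Ropp_involutive.
    rewrite sum_f_R0_mul_add. apply sum_eq; intros i _.
    rewrite sum_f_R0_mul_add. apply sum_eq; intros j _.
    unfold g, circ_x, circ_y. rewrite !Rpow_mult_distr, !pow_add. ring.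
Qed.

Lemma melnikov_expand m n ap bp am bm h :
  melnikov m n ap bp am bm h =
  sum_f_R0 (fun i => sum_f_R0 (fun j => sqrt h ^ (i + j + 1) *
    (bp i j * half_int i (j + 1) (theta0 m h) + ap i j * half_int (i + 1) j (theta0 m h)
     + bm i j * half_int i (j + 1) (theta0 m h + PI)
     + am i j * half_int (i + 1) j (theta0 m h + PI))) (n - i)) n.
Proof.
  unfold melnikov. rewrite !line_integral_circle, <- sum_plus. apply sum_eq; intros i _.
  rewrite <- sum_plus. apply sum_eq; intros j _. unfold half_int.
  replace (theta0 m h + PI - PI) with (theta0 m h) by ring. ring.
Qed.

Definition basis_orders (m n : nat) : list nat :=
  map (fun p => 2 * p + 1)%nat (seq 0 (n / 2 + 1))
  ++ flat_map (fun p => map (fun kk => 2 * p + (m - 1) * (kk + 1) + 1)%nat (seq 0 (2 * p + 1)))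
              (seq 0 (n / 2 + 1))
  ++ map (fun l => 2 * (l + 1))%nat (seq 0 ((n + 1) / 2)).

Lemma has_poly_order_h_pow m q : (2 <= m)%nat ->
  has_poly_order (2 * q) (fun u => (u ^ 2 + u ^ (2 * m)) ^ q).
Proof.
  intros Hm. induction q as [|q IH].
  - apply (has_poly_order_ext _ _ _ has_poly_order_one). intros u; simpl; ring.
  - replace (2 * S q)%nat with (2 + 2 * q)%nat by lia.
    apply (has_poly_order_ext _ _ _ (has_poly_order_add (2 + 2 * q) (2 * m + 2 * q) _ _ ltac:(lia)
      (has_poly_order_mul_pow 2 _ _ IH) (has_poly_order_mul_pow (2 * m) _ _ IH))).
    intros u; simpl; ring.
Qed.

Lemma basis_poly_orders m n : (2 <= m)%nat ->
  Forall2 (fun f d => has_poly_order d f) (basis m n) (basis_orders m n).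
Proof.
  intros Hm. unfold basis, basis_orders.
  repeat apply Forall2_app.
  - apply Forall2_map_map. intros. apply has_poly_order_pow.
  - apply Forall2_flat_map. intros. apply Forall2_map_map. intros. apply has_poly_order_pow.
  - apply Forall2_map_map. intros. now apply has_poly_order_h_pow.
Qed.

(* The orders 2p + 1 are odd and < m, the orders 2p + (m - 1)(kk + 1) + 1 are odd, >= m and
   pairwise distinct because 2p < m - 1, and the orders 2(l + 1) are even. *)
Lemma basis_orders_NoDup m k n : m = (2 * k + 1)%nat -> (n < m - 1)%nat ->
  NoDup (basis_orders m n).
Proof.
  intros -> Hn. unfold basis_orders.
  replace (2 * k + 1 - 1)%nat with (2 * k)%nat by lia.
  assert (Hp : forall p, In p (seq 0 (n / 2 + 1)) -> (p < k)%nat).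
  { intros p Hp%in_seq. pose proof (Nat.Div0.mul_div_le n 2). lia. }
  assert (Hinj : forall a b, NoDup (map (fun kk => 2 * a + 2 * k * (kk + 1) + 1)%nat (seq 0 b))).
  { intros a b. apply NoDup_map_NoDup_ForallPairs; [intros x y _ _; nia | apply seq_NoDup]. }
  apply NoDup_app; [| apply NoDup_app |].
  - apply NoDup_map_NoDup_ForallPairs; [intros x y _ _; lia | apply seq_NoDup].
  - apply NoDup_flat_map; [apply seq_NoDup | auto |].
    intros p p' e Hpl Hp'l Hne (a & <- & _)%in_map_iff (b & Heq & _)%in_map_iff.
    apply Hp in Hpl, Hp'l. apply Hne.
    destruct (Nat.lt_trichotomy a b) as [Hab|[<-|Hab]]; nia.
  - apply NoDup_map_NoDup_ForallPairs; [intros x y _ _; lia | apply seq_NoDup].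
  - intros e (p & _ & (a & <- & _)%in_map_iff)%in_flat_map (l & Heq & _)%in_map_iff. lia.
  - intros e (p & <- & Hpl)%in_map_iff Hin. apply Hp in Hpl.
    apply in_app_or in Hin as [(p' & _ & (a & Heq & _)%in_map_iff)%in_flat_map
                              | (l & Heq & _)%in_map_iff]; lia.
Qed.

Lemma length_basis m n :
  length (basis m n) = (n / 2 + 1 + (n / 2 + 1) * (n / 2 + 1) + (n + 1) / 2)%nat.
Proof.
  assert (Hmid : forall N, length (flat_map (fun p => map (fun kk => fun u : R =>
      u ^ (2 * p + (m - 1) * (kk + 1) + 1)) (seq 0 (2 * p + 1))) (seq 0 N)) = (N * N)%nat).
  { induction N as [|N IH]; [reflexivity|].
    rewrite seq_S, flat_map_app, length_app, IH; simpl.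
    rewrite app_nil_r, length_map, length_seq. lia. }
  unfold basis. rewrite !length_app, !length_map, Hmid, !length_seq. lia.
Qed.

Lemma length_basis_Z m n : Z.of_nat (length (basis m n)) =
  ((Z.of_nat n - 1) / 2 + (Z.of_nat n / 2) ^ 2 + 3 * (Z.of_nat n / 2) + 3)%Z.
Proof.
  rewrite length_basis, !Nat2Z.inj_add, !Nat2Z.inj_mul, !Nat2Z.inj_div, !Nat2Z.inj_add.
  replace (Z.of_nat n + Z.of_nat 1)%Z with ((Z.of_nat n - 1) + 1 * 2)%Z by lia.
  rewrite Z.div_add, Nat2Z.inj_div by lia. change (Z.of_nat 2) with 2%Z. ring.
Qed.

Lemma span_basis_monomial m n p i j : (1 <= m)%nat -> (p <= n / 2)%nat -> (i + j = 2 * p + 1)%nat ->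
  span (basis m n) (fun u => u ^ i * (u ^ m) ^ j).
Proof.
  intros Hm Hp Hij.
  apply (pos_subspace_ext _ (span_pos_subspace _)) with (f := fun u => u ^ (i + m * j)).
  - apply span_In. unfold basis. apply in_or_app. destruct j as [|kk].
    + left. replace (i + m * 0)%nat with (2 * p + 1)%nat by lia.
      apply in_map_iff. exists p. split; [reflexivity | apply in_seq; lia].
    + right. apply in_or_app. left.
      replace (i + m * S kk)%nat with (2 * p + (m - 1) * (kk + 1) + 1)%nat
        by (destruct m as [|m]; [lia|]; simpl; nia).
      apply in_flat_map. exists p. split; [apply in_seq; lia|].
      apply in_map_iff. exists kk. split; [reflexivity | apply in_seq; lia].
  - intros u _. now rewrite pow_add, pow_mult.
Qed.

Lemma span_basis_h_pow m n q : (1 <= q)%nat -> (2 * q <= n + 1)%nat ->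
  span (basis m n) (fun u => h_of_u m u ^ q).
Proof.
  intros Hq Hqn. apply span_In. unfold basis. apply in_or_app. right. apply in_or_app. right.
  apply in_map_iff. exists (q - 1)%nat. split.
  - unfold h_of_u. now replace (q - 1 + 1)%nat with q by lia.
  - apply in_seq. pose proof (Nat.div_le_lower_bound (n + 1) 2 q). lia.
Qed.

Lemma span_basis_hom_form m n D F p : (1 <= m)%nat -> hom_form D F ->
  D = (2 * p + 1)%nat -> (p <= n / 2)%nat ->
  span (basis m n) (fun u =>
    sqrt (h_of_u m u) ^ D * F (u / sqrt (h_of_u m u)) (u ^ m / sqrt (h_of_u m u))).
Proof.
  intros Hm HF. pose proof (span_pos_subspace (basis m n)) as HS.
  induction HF as [i j | D F G _ IHF _ IHG | D k F _ IH | D F G _ IH HFG]; intros HD Hp.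
  - apply (pos_subspace_ext _ HS _ _ (span_basis_monomial m n p i j Hm Hp HD)).
    intros u Hu. pose proof (sqrt_lt_R0 _ (h_of_u_pos m u Hu)).
    unfold Rdiv. rewrite !Rpow_mult_distr, !pow_inv, pow_add.
    field. split; apply pow_nonzero; lra.
  - apply (pos_subspace_ext _ HS _ _ (pos_subspace_add _ HS _ _ (IHF HD Hp) (IHG HD Hp))).
    intros u _. ring.
  - apply (pos_subspace_ext _ HS _ _ (pos_subspace_scal _ HS k _ (IH HD Hp))).
    intros u _. ring.
  - apply (pos_subspace_ext _ HS _ _ (IH HD Hp)). intros u _. now rewrite HFG.
Qed.

Lemma span_basis_half_int m n a b : (1 <= m)%nat -> (1 <= a + b <= n + 1)%nat ->
  span (basis m n) (fun u =>
    sqrt (h_of_u m u) ^ (a + b) * half_int a b (theta0 m (h_of_u m u))) /\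
  span (basis m n) (fun u =>
    sqrt (h_of_u m u) ^ (a + b) * half_int a b (theta0 m (h_of_u m u) + PI)).
Proof.
  intros Hm Hab. pose proof (span_pos_subspace (basis m n)) as HS.
  pose proof (half_int_shape_all a b) as Hshape. unfold half_int_shape in Hshape.
  destruct (Nat.even (a + b)) eqn:Hpar.
  - destruct Hshape as [kappa Hk].
    destruct (proj1 (Nat.even_spec (a + b)) Hpar) as [p Hp].
    pose proof (span_basis_h_pow m n p ltac:(lia) ltac:(lia)) as Hspan.
    split; apply (pos_subspace_ext _ HS _ _ (pos_subspace_scal _ HS kappa _ Hspan));
      intros u Hu; rewrite Hk, Hp, pow_mult, pow2_sqrt by (apply Rlt_le, h_of_u_pos, Hu); ring.
  - destruct Hshape as (F & HF & HG).
    assert (Hodd : Nat.odd (a + b) = true) by (rewrite <- Nat.negb_even, Hpar; reflexivity).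
    destruct (proj1 (Nat.odd_spec (a + b)) Hodd) as [p Hp].
    assert (Hsign : forall s c, F (- s) (- c) = - F s c).
    { intros s c. rewrite (hom_form_opp _ _ HF), Hp, Nat.add_1_r, pow_1_odd. ring. }
    pose proof (span_basis_hom_form m n (a + b) F p Hm HF Hp
      ltac:(pose proof (Nat.div_le_lower_bound n 2 p); lia)) as Hspan.
    split; [apply (pos_subspace_ext _ HS _ _ (pos_subspace_scal _ HS 2 _ Hspan))
           |apply (pos_subspace_ext _ HS _ _ (pos_subspace_scal _ HS (-2) _ Hspan))];
      intros u Hu; destruct (sin_cos_theta0 m u Hu) as [Hsin Hcos];
      rewrite HG, ?neg_sin, ?neg_cos, Hsin, Hcos, ?Hsign; ring.
Qed.

Lemma melnikov_in_span m n ap bp am bm : (1 <= m)%nat ->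
  span (basis m n) (fun u => melnikov m n ap bp am bm (h_of_u m u)).
Proof.
  intros Hm. pose proof (span_pos_subspace (basis m n)) as HS.
  eapply (pos_subspace_ext _ HS); [|intros u _; symmetry; apply melnikov_expand].
  apply (pos_subspace_sum _ HS). intros i Hi. apply (pos_subspace_sum _ HS). intros j Hj.
  destruct (span_basis_half_int m n i (j + 1) Hm ltac:(lia)) as [Hb_up Hb_down].
  destruct (span_basis_half_int m n (i + 1) j Hm ltac:(lia)) as [Ha_up Ha_down].
  replace (i + (j + 1))%nat with (i + j + 1)%nat in Hb_up, Hb_down by lia.
  replace (i + 1 + j)%nat with (i + j + 1)%nat in Ha_up, Ha_down by lia.
  apply (pos_subspace_ext _ HS _ _ (pos_subspace_add _ HS _ _
    (pos_subspace_add _ HS _ _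
      (pos_subspace_add _ HS _ _ (pos_subspace_scal _ HS (bp i j) _ Hb_up)
                                 (pos_subspace_scal _ HS (ap i j) _ Ha_up))
      (pos_subspace_scal _ HS (bm i j) _ Hb_down))
    (pos_subspace_scal _ HS (am i j) _ Ha_down))).
  intros u _. ring.
Qed.

(** * Every basis function is a Melnikov function *)

Definition melnikov_range (m n : nat) (g : R -> R) : Prop :=
  exists ap bp am bm : nat -> nat -> R,
    forall u, 0 < u -> melnikov m n ap bp am bm (h_of_u m u) = g u.

Lemma melnikov_range_pos_subspace m n : pos_subspace (melnikov_range m n).
Proof.
  split.
  - exists (fun _ _ => 0), (fun _ _ => 0), (fun _ _ => 0), (fun _ _ => 0). intros u _.
    rewrite melnikov_expand. apply sum_eq_R0. intros i _. apply sum_eq_R0. intros j _. ring.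
  - intros f g (ap & bp & am & bm & Hf) (ap' & bp' & am' & bm' & Hg).
    exists (fun i j => ap i j + ap' i j), (fun i j => bp i j + bp' i j),
           (fun i j => am i j + am' i j), (fun i j => bm i j + bm' i j).
    intros u Hu. cbv beta. rewrite <- Hf, <- Hg by assumption.
    rewrite !melnikov_expand, <- sum_plus.
    apply sum_eq. intros i _. rewrite <- sum_plus. apply sum_eq. intros j _. ring.
  - intros c f (ap & bp & am & bm & Hf).
    exists (fun i j => c * ap i j), (fun i j => c * bp i j),
           (fun i j => c * am i j), (fun i j => c * bm i j).
    intros u Hu. cbv beta. rewrite <- Hf by assumption. rewrite !melnikov_expand, scal_sum.
    apply sum_eq. intros i _. rewrite Rmult_comm, scal_sum. apply sum_eq. intros j _. ring.
  - intros f g (ap & bp & am & bm & Hf) Hfg. exists ap, bp, am, bm.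
    intros u Hu. rewrite Hf by assumption. now apply Hfg.
Qed.

Definition delta2 (i0 j0 : nat) (i j : nat) : R :=
  if (Nat.eqb i i0 && Nat.eqb j j0)%bool then 1 else 0.

Lemma sum_delta2 n i0 j0 (X : nat -> nat -> R) : (i0 + j0 <= n)%nat ->
  sum_f_R0 (fun i => sum_f_R0 (fun j => delta2 i0 j0 i j * X i j) (n - i)) n = X i0 j0.
Proof.
  intros Hij. unfold delta2. rewrite (sum_f_R0_single _ n i0); [|lia|].
  - rewrite (sum_f_R0_single _ (n - i0) j0); [|lia|].
    + rewrite !Nat.eqb_refl. simpl. ring.
    + intros j Hj. rewrite Nat.eqb_refl, (proj2 (Nat.eqb_neq j j0)) by assumption. simpl. ring.
  - intros i Hi. apply sum_eq_R0. intros j _.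
    rewrite (proj2 (Nat.eqb_neq i i0)) by assumption. simpl. ring.
Qed.

Lemma melnikov_range_half_int m n a b : (1 <= a + b <= n + 1)%nat ->
  melnikov_range m n (fun u =>
    sqrt (h_of_u m u) ^ (a + b) * half_int a b (theta0 m (h_of_u m u))).
Proof.
  intros Hab. destruct b as [|j].
  - destruct a as [|i]; [lia|].
    exists (delta2 i 0), (fun _ _ => 0), (fun _ _ => 0), (fun _ _ => 0). intros u _.
    rewrite melnikov_expand. cbv beta.
    replace (S i + 0)%nat with (i + 0 + 1)%nat by lia. replace (S i) with (i + 1)%nat by lia.
    rewrite <- (sum_delta2 n i 0 (fun i j => sqrt (h_of_u m u) ^ (i + j + 1) *
      half_int (i + 1) j (theta0 m (h_of_u m u)))) by lia.
    apply sum_eq; intros; apply sum_eq; intros; ring.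
  - exists (fun _ _ => 0), (delta2 a j), (fun _ _ => 0), (fun _ _ => 0). intros u _.
    rewrite melnikov_expand. cbv beta.
    replace (a + S j)%nat with (a + j + 1)%nat by lia. replace (S j) with (j + 1)%nat by lia.
    rewrite <- (sum_delta2 n a j (fun i j => sqrt (h_of_u m u) ^ (i + j + 1) *
      half_int i (j + 1) (theta0 m (h_of_u m u)))) by lia.
    apply sum_eq; intros; apply sum_eq; intros; ring.
Qed.

(* Integration by parts over [theta0 - PI, theta0] gives
   i half_int (i - 1) (j + 1) - j half_int (i + 1) (j - 1) = 2 sin^i theta0 cos^j theta0
   since i + j is odd, and sqrt h ^ (i + j) sin^i theta0 cos^j theta0 = u^i (u^m)^j. *)
Lemma melnikov_range_monomial m n p i j : (p <= n / 2)%nat -> (i + j = 2 * p + 1)%nat ->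
  melnikov_range m n (fun u => u ^ i * (u ^ m) ^ j).
Proof.
  intros Hp Hij. pose proof (melnikov_range_pos_subspace m n) as HS.
  pose proof (Nat.Div0.mul_div_le n 2) as Hpn.
  assert (Hterm : forall c a b, c = 0 \/ (1 <= a + b <= n + 1 /\ a + b = i + j)%nat ->
    melnikov_range m n (fun u =>
      c * (sqrt (h_of_u m u) ^ (i + j) * half_int a b (theta0 m (h_of_u m u))))).
  { intros c a b [->|[Hab Habij]].
    - apply (pos_subspace_ext _ HS _ _ (pos_subspace_zero _ HS)). intros u _. ring.
    - rewrite <- Habij. apply (pos_subspace_scal _ HS), melnikov_range_half_int, Hab. }
  apply (pos_subspace_ext _ HS _ _ (pos_subspace_scal _ HS (/ 2) _ (pos_subspace_add _ HS _ _
    (Hterm (INR i) (i - 1)%nat (j + 1)%nat ltac:(destruct i; [now left | right; lia]))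
    (Hterm (- INR j) (i + 1)%nat (j - 1)%nat
       ltac:(destruct j; [left; simpl; ring | right; lia]))))).
  intros u Hu. destruct (sin_cos_theta0 m u Hu) as [Hsin Hcos].
  pose proof (sqrt_lt_R0 _ (h_of_u_pos m u Hu)) as Hs.
  transitivity (/ 2 * sqrt (h_of_u m u) ^ (i + j) *
    (INR i * half_int (i - 1) (j + 1) (theta0 m (h_of_u m u))
     - INR j * half_int (i + 1) (j - 1) (theta0 m (h_of_u m u)))); [ring|].
  unfold half_int. rewrite trig_int_parts, half_int_jump, Hij.
  replace (Nat.even (2 * p + 1)) with false
    by (rewrite Nat.add_1_r, Nat.even_succ, Nat.odd_mul; reflexivity).
  rewrite Hsin, Hcos, <- Hij. unfold Rdiv. rewrite !Rpow_mult_distr, !pow_inv, pow_add.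
  field. split; apply pow_nonzero; lra.
Qed.

(* h^q = sqrt h ^ (2q) half_int 0 (2q) theta0 / kappa, where the constant kappa is positive. *)
Lemma melnikov_range_h_pow m n q : (1 <= q)%nat -> (2 * q <= n + 1)%nat ->
  melnikov_range m n (fun u => h_of_u m u ^ q).
Proof.
  intros Hq Hqn. pose proof (melnikov_range_pos_subspace m n) as HS.
  pose proof (half_int_shape_all 0 (2 * q)) as Hshape. unfold half_int_shape in Hshape.
  replace (Nat.even (0 + 2 * q)) with true in Hshape by (now rewrite Nat.add_0_l, Nat.even_mul).
  destruct Hshape as [kappa Hk].
  assert (Hkappa : 0 < kappa) by (rewrite <- (Hk 0); apply half_int_cos_pow_pos).
  apply (pos_subspace_ext _ HS _ _ (pos_subspace_scal _ HS (/ kappa) _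
    (melnikov_range_half_int m n 0 (2 * q) ltac:(lia)))).
  intros u Hu. rewrite Hk, Nat.add_0_l, pow_mult, pow2_sqrt by (apply Rlt_le, h_of_u_pos, Hu).
  field. lra.
Qed.

Lemma basis_in_melnikov_range m n f : (1 <= m)%nat -> In f (basis m n) -> melnikov_range m n f.
Proof.
  intros Hm. pose proof (melnikov_range_pos_subspace m n) as HS.
  unfold basis. intros [Hf|[Hf|Hf]%in_app_or]%in_app_or.
  - apply in_map_iff in Hf as (p & <- & Hp%in_seq).
    apply (pos_subspace_ext _ HS _ _
      (melnikov_range_monomial m n p (2 * p + 1) 0 ltac:(lia) ltac:(lia))).
    intros u _. ring.
  - apply in_flat_map in Hf as (p & Hp%in_seq & (kk & <- & Hkk%in_seq)%in_map_iff).
    apply (pos_subspace_ext _ HS _ _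
      (melnikov_range_monomial m n p (2 * p - kk) (kk + 1) ltac:(lia) ltac:(lia))).
    intros u _. rewrite <- pow_mult, <- pow_add. f_equal.
    destruct m as [|m]; [lia|]. simpl. nia.
  - apply in_map_iff in Hf as (l & <- & Hl%in_seq).
    apply (pos_subspace_ext _ HS _ _ (melnikov_range_h_pow m n (l + 1) ltac:(lia)
      ltac:(pose proof (Nat.Div0.mul_div_le (n + 1) 2); lia))).
    intros u _. reflexivity.
Qed.

Theorem lemma3p5 (m k n : nat) (Hm : m = (2 * k + 1)%nat) (Hn : (n < m - 1)%nat) :
  Z.of_nat (length (basis m n)) =
    ((Z.of_nat n - 1) / 2 + (Z.of_nat n / 2) ^ 2 + 3 * (Z.of_nat n / 2) + 3)%Z
  /\ lin_indep_pos (basis m n)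
  /\ (forall ap bp am bm : nat -> nat -> R,
        exists cs : list R, length cs = length (basis m n) /\
          forall u, 0 < u -> melnikov m n ap bp am bm (u ^ 2 + u ^ (2 * m)) = lincomb (basis m n) cs u)
  /\ (forall cs : list R, length cs = length (basis m n) ->
        exists ap bp am bm : nat -> nat -> R,
          forall u, 0 < u -> melnikov m n ap bp am bm (u ^ 2 + u ^ (2 * m)) = lincomb (basis m n) cs u).
Proof.
  assert (Hm1 : (1 <= m)%nat) by lia.
  split; [apply length_basis_Z|].
  split; [exact (lin_indep_pos_of_poly_orders _ _ (basis_poly_orders m n ltac:(lia))
                                                 (basis_orders_NoDup m k n Hm Hn))|].
  split.
  - intros ap bp am bm. exact (melnikov_in_span m n ap bp am bm Hm1).
  - intros cs _.
    exact (pos_subspace_lincomb _ (melnikov_range_pos_subspace m n) (basis m n) cs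
             (fun f Hf => basis_in_melnikov_range m n f Hm1 Hf)).
Qed.
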